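(* (i) Let $P(z,\bar z)=\alpha_{n,0}z^n+P_{n-1}(z,\bar z)$ be a polyanalytic polynomial with $\alpha_{n,0}\in\mathbb{C}\setminus\{0\}$, where $P_{n-1}$ is a polyanalytic polynomial with $\deg(P_{n-1})\leq n-1$. Then $P$ has at most $n^2$ zeros. (ii) Let $P(z,\bar z)=p(z)+\overline{q(z)}$, where $p,q$ are analytic polynomials with $\deg(p)=n>\deg(q)$. Then $P$ has at most $n^2$ zeros. Moreover, in both (i) and (ii), if $P$ has exactly $n^2$ zeros, then $P$ is irreducible.
   Context: A polyanalytic polynomial is a function $\mathbb{C}\to\mathbb{C}$ of the form $P(z,\bar z)=\sum_{j+k\le n}\alpha_{j,k} z^j \bar z^{k}$ with complex coefficients (a polynomial in $z$ and $\bar z$); two such polynomials are equal iff all coefficients agree. Its degree is the largest $j+k$ with $\alpha_{j,k}\neq 0$. $P$ is reducible if $P=P_1P_2$ for polyanalytic polynomials with $\deg(P_1),\deg(P_2)\geq 1$, and irreducible otherwise. A zero of $P$ is a point $z\in\mathbb{C}$ with $P(z,\bar z)=0$; zeros are counted as distinct points. *)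

(* polyanalytic polynomials as bivariate polynomials
   {mpoly C[2]} with 'X_0 standing for z and 'X_1 for \bar z,
   over C := R[i] (complex numbers over a realType R). *)
From HB Require Import structures.
From mathcomp Require Import all_boot all_order all_algebra.
From mathcomp Require Import mpoly.
From mathcomp Require Import complex.
From mathcomp Require Import reals.
Set Implicit Arguments. Unset Strict Implicit. Unset Printing Implicit Defensive.
Import Order.TTheory GRing.Theory Num.Theory.
Local Open Scope ring_scope.

Section Polyanalytic.
Variable R : realType.
Local Notation C := R[i].

Definition polyan := {mpoly C[2]}.

(* degree: largest j+k with alpha_{j,k} != 0; msize P = 1 + deg P (0 for P = 0) *)
Definition pdeg (P : polyan) : nat := (msize P).-1.

Definition peval (P : polyan) (z : C) : C :=
  P.@[fun i : 'I_2 => if val i == 0%N then z else z^*].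

Definition pzero (P : polyan) (z : C) : Prop := peval P z = 0.

Definition preducible (P : polyan) : Prop :=
  exists P1 P2 : polyan, [/\ (1 <= pdeg P1)%N, (1 <= pdeg P2)%N & P = P1 * P2].

Definition pirreducible (P : polyan) : Prop := ~ preducible P.

Definition at_most_zeros (P : polyan) (m : nat) : Prop :=
  forall s : seq C, uniq s -> (forall z, z \in s -> pzero P z) -> (size s <= m)%N.

Definition exactly_zeros (P : polyan) (m : nat) : Prop :=
  exists s : seq C, [/\ uniq s, size s = m & forall z, z \in s <-> pzero P z].

Definition an_of (p : {poly C}) : polyan :=
  \sum_(j < size p) p`_j *: 'X_(0 : 'I_2) ^+ j.

Definition conjan_of (q : {poly C}) : polyan :=
  \sum_(j < size q) (q`_j)^* *: 'X_(1 : 'I_2) ^+ j.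

End Polyanalytic.

(** On the zero set of [P = a z^n + Q] with [deg Q < n], the relation [P = 0]
   and its complex conjugate rewrite [z^n] and [\bar z^n] as combinations of
   monomials of smaller total degree.  Hence every monomial [z^i \bar z^j], in
   particular every analytic polynomial, agrees on the zero set with a
   combination of the [n^2] monomials [z^i \bar z^j] with [i, j < n].  For
   [N] distinct zeros the Lagrange polynomials then factor the [N x N]
   identity matrix through a space of dimension [n^2], so [N <= n^2].
   The top-degree part of a product is the product of the top-degree parts,
   so the factors of such a [P] have the same shape; a factorisation with
   degrees [d1 + d2 = n] would therefore leave room for at most
   [d1^2 + d2^2 < n^2] zeros.  In (ii), [p + \bar q] has this shape with
   [n = deg p]. *)
From HB Require Import structures.
From mathcomp Require Import all_boot all_order all_algebra.
From mathcomp Require Import mpoly.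
From mathcomp Require Import complex.
From mathcomp Require Import reals.
From mathcomp Require Import fingroup perm.
From mathcomp Require Import ring zify.
Import Order.TTheory GRing.Theory Num.Theory.
Local Open Scope ring_scope.
Set Implicit Arguments. Unset Strict Implicit. Unset Printing Implicit Defensive.

Local Notation i0 := (0%R : 'I_2).
Local Notation i1 := (1%R : 'I_2).

Section LagrangeBound.
Variable F : fieldType.

Definition lagrange_basis (s : seq F) (t : 'I_(size s)) : {poly F} :=
  \prod_(v < size s | v != t) (('X - (s`_v)%:P) * ((s`_t - s`_v)^-1)%:P).

Lemma horner_lagrange_basis (s : seq F) (t u : 'I_(size s)) : uniq s ->
  (lagrange_basis t).[s`_u] = (t == u)%:R.
Proof.
move=> us; rewrite horner_prod; have [<-|ne] := eqVneq t u.
  apply: big1 => v vt; rewrite hornerM hornerXsubC hornerC mulfV //.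
  by rewrite subr_eq0 nth_uniq // eq_sym.
by rewrite (bigD1 u) 1?eq_sym //= hornerM hornerXsubC subrr !mul0r.
Qed.

Lemma uniq_size_le_span (N : nat) (b : 'I_N -> F -> F) (s : seq F) :
  uniq s ->
  (forall p : {poly F}, exists c : 'rV_N,
     forall x, x \in s -> p.[x] = \sum_r c 0 r * b r x) ->
  (size s <= N)%N.
Proof.
move=> us span.
have [c hc] : exists c : 'I_(size s) -> 'rV_N, forall t x, x \in s ->
    (lagrange_basis t).[x] = \sum_r c t 0 r * b r x.
  exact: fin_all_exists (fun t => span (lagrange_basis t)).
pose A := \matrix_(t < size s, r < N) c t 0 r.
pose B := \matrix_(r < N, u < size s) b r s`_u.
have AB1 : A *m B = 1%:M.
  apply/matrixP => t u; rewrite !mxE -horner_lagrange_basis // hc ?mem_nth //.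
  by apply: eq_bigr => r _; rewrite !mxE.
rewrite -[size s](mxrank1 F) -AB1.
exact: leq_trans (mxrankM_maxl A B) (rank_leq_col A).
Qed.

End LagrangeBound.

Lemma ord2P (i : 'I_2) : i = i0 \/ i = i1.
Proof. by case: i => [[|[|]]] // ?; [left | right]; apply/val_inj. Qed.

Lemma prod_ord2 (T : comPzRingType) (f : 'I_2 -> T) : \prod_i f i = f 0 * f 1.
Proof. by rewrite big_ord_recl big_ord1; congr (_ * f _); apply/val_inj. Qed.

Lemma mdeg2 (m : 'X_{1..2}) : mdeg m = (m i0 + m i1)%N.
Proof.
rewrite mdegE big_ord_recl big_ord1.
by congr (_ + m _)%N; apply/val_inj.
Qed.

Lemma msize_ZXn n (R : nzRingType) (c : R) (i : 'I_n) j :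
  (msize (c *: 'X_i ^+ j : {mpoly R[n]}) <= j.+1)%N.
Proof.
by apply: leq_trans (msizeZ_le _ _) _; rewrite mpolyXn msizeX mdegMn mdeg1 mul1n.
Qed.

Lemma msym_eq0 n (R : nzRingType) (s : 'S_n) (p : {mpoly R[n]}) :
  (msym s p == 0) = (p == 0).
Proof. by rewrite -[X in _ == X](msym0 _ s) (inj_eq (inj_msym s)). Qed.

Lemma msize_msym n (R : nzRingType) (s : 'S_n) (p : {mpoly R[n]}) :
  msize (msym s p) = msize p.
Proof.
have le s' (q : {mpoly R[n]}) : (msize (msym s' q) <= msize q)%N.
  rewrite [X in (X <= _)%N]msizeE; apply/bigmax_leqP_seq => m mq _.
  rewrite -(mdeg_mperm m s'); apply: msize_mdeg_lt.
  by rewrite mcoeff_msupp -mcoeff_sym -mcoeff_msupp.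
apply/eqP; rewrite eqn_leq le /=.
by rewrite -{1}[p]msym1m -(mulgV s) msymMm le.
Qed.

(* With the degree-then-lexicographic order of [mlead], a leading monomial
   free of the first variable is the least monomial of its degree. *)
Lemma mlead_top_unique (R : nzRingType) (G : {mpoly R[2]}) m :
  mlead G i0 = 0%N -> m \in msupp G -> mdeg m = mdeg (mlead G) -> m = mlead G.
Proof.
move=> l0 mG md; apply/eqP; apply: contraT => ne.
have m0 : (0 < m i0)%N.
  rewrite lt0n; apply: contra ne => /eqP m0; apply/eqP/mnmP => i.
  move: md; rewrite !mdeg2 m0 l0 !add0n => m1.
  by have [->|->] := ord2P i; rewrite ?m0 ?l0.
have : (mlead G < m)%O.
  by apply/ltmcP => //; exists i0 => [[]|]; rewrite ?l0.
by rewrite ltNge msupp_le_mlead.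
Qed.

Section Polyanalytic.
Variable R : realType.
Local Notation C := R[i].
Local Notation X0 := ('X_i0 : polyan R).
Local Notation zpow d := (U_(i0) *+ d)%MM.
Local Notation swap := (tperm i0 i1).
Local Notation mswap m := [multinom m (swap i) | i < 2].

Lemma pevalE (Q : polyan R) z :
  peval Q z = \sum_(m <- msupp Q) Q@_m * (z ^+ m i0 * z^* ^+ m i1).
Proof. by rewrite /peval mevalE; apply: eq_bigr => m _; rewrite prod_ord2. Qed.

Lemma peval_conj (Q : polyan R) z :
  (peval Q z)^* = \sum_(m <- msupp Q) (Q@_m)^* * (z^* ^+ m i0 * z ^+ m i1).
Proof.
rewrite pevalE rmorph_sum; apply: eq_bigr => m _.
by rewrite !rmorphM !rmorphXn /= conjCK.
Qed.

Lemma pevalM (P1 P2 : polyan R) z : peval (P1 * P2) z = peval P1 z * peval P2 z.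
Proof. exact: mevalM. Qed.

Lemma peval_ZX0nD (a : C) d (Q : polyan R) z :
  peval (a *: X0 ^+ d + Q) z = a * z ^+ d + peval Q z.
Proof. by rewrite /peval mevalD mevalZ rmorphXn /= mevalXU. Qed.

Section ZeroSet.
Variables (a : C) (d : nat) (Q : polyan R).
Hypotheses (a0 : a != 0) (hQ : (msize Q <= d)%N).
Local Notation P := (a *: X0 ^+ d + Q).

(* [r < d * d] encodes the exponent pair [(r %/ d, r %% d)]. *)
Definition reduced_monomial (r : nat) (z : C) := z ^+ (r %/ d) * z^* ^+ (r %% d).

Definition reduced_span (f : C -> C) := exists c : 'rV[C]_(d * d),
  forall z, pzero P z -> f z = \sum_(r < d * d) c 0 r * reduced_monomial r z.

Lemma reduced_span_ext f g :
  (forall z, pzero P z -> f z = g z) -> reduced_span g -> reduced_span f.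
Proof. by move=> fg [c hc]; exists c => z hz; rewrite fg // hc. Qed.

Lemma reduced_span_lincomb (T : eqType) (s : seq T) (k : T -> C) g :
  (forall x, x \in s -> reduced_span (g x)) ->
  reduced_span (fun z => \sum_(x <- s) k x * g x z).
Proof.
elim: s => [|x s IH] gs.
  by exists 0 => z _; rewrite big_nil big1 // => r _; rewrite mxE mul0r.
have [c hc] := gs x (mem_head x s).
have [e he] : reduced_span (fun z => \sum_(y <- s) k y * g y z).
  by apply: IH => y ys; apply: gs; rewrite inE ys orbT.
exists (k x *: c + e) => z hz; rewrite big_cons hc // he // mulr_sumr -big_split.
by apply: eq_bigr => r _; rewrite !mxE mulrDl mulrA.
Qed.

Lemma zero_zpow z : pzero P z -> z ^+ d = - a^-1 * peval Q z.
Proof.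
rewrite /pzero peval_ZX0nD => /eqP; rewrite addr_eq0 => /eqP az.
by rewrite -[z ^+ d](mulKf a0) az mulrN mulNr.
Qed.

Lemma zero_zbarpow z : pzero P z ->
  z^* ^+ d = - (a^*)^-1 * (peval Q z)^*.
Proof.
rewrite /pzero peval_ZX0nD => /(congr1 (fun x => x^*)).
rewrite rmorph0 rmorphD rmorphM rmorphXn => /eqP.
rewrite addr_eq0 => /eqP az; have ac0 : a^* != 0 by rewrite conjC_eq0.
by rewrite -[z^* ^+ d](mulKf ac0) az mulrN mulNr.
Qed.

Lemma reduced_span_monomial i j : reduced_span (fun z => z ^+ i * z^* ^+ j).
Proof.
have [k] := ubnP (i + j); elim: k i j => [//|k IH] i j ijk.
have [di|id] := leqP d i.
  apply: (@reduced_span_ext _ (fun z => \sum_(m <- msupp Q)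
    (- a^-1 * Q@_m) * (z ^+ (i - d + m i0) * z^* ^+ (j + m i1)))).
    move=> z hz; rewrite -(subnK di) exprD zero_zpow // pevalE !mulr_sumr.
    rewrite mulr_suml; apply: eq_bigr => m _; rewrite addnK !exprD; ring.
  apply: reduced_span_lincomb => m /msize_mdeg_lt.
  by rewrite mdeg2 => ?; apply: IH; lia.
have [dj|jd] := leqP d j.
  apply: (@reduced_span_ext _ (fun z => \sum_(m <- msupp Q)
    (- (a^*)^-1 * (Q@_m)^*) * (z ^+ (i + m i1) * z^* ^+ (j - d + m i0)))).
    move=> z hz; rewrite -(subnK dj) [z^* ^+ _]exprD zero_zbarpow //.
    rewrite peval_conj !mulr_sumr.
    apply: eq_bigr => m _; rewrite addnK !exprD; ring.
  apply: reduced_span_lincomb => m /msize_mdeg_lt.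
  by rewrite mdeg2 => ?; apply: IH; lia.
have ijd : (i * d + j < d * d)%N by nia.
exists (\row_(r < d * d) ((r : nat) == i * d + j)%:R) => z _.
rewrite (bigD1 (Ordinal ijd)) //= big1 => [|r rij]; last first.
  rewrite mxE; case: eqP => [rE|_]; last by rewrite mul0r.
  by case/eqP: rij; apply/val_inj.
rewrite mxE eqxx mul1r addr0 /reduced_monomial.
by rewrite divnMDl ?modnMDl ?divn_small ?modn_small ?addn0 //; lia.
Qed.

Lemma size_zero_seq_le (s : seq C) :
  uniq s -> (forall z, z \in s -> pzero P z) -> (size s <= d * d)%N.
Proof.
move=> us zs; apply: (uniq_size_le_span (b := reduced_monomial)) => // p.
have [c hc] :
    reduced_span (fun z => \sum_(i < size p) p`_i * (z ^+ i * z^* ^+ 0)).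
  by apply: reduced_span_lincomb => i _; apply: reduced_span_monomial.
exists c => x xs; rewrite -(hc x (zs x xs)) horner_coef.
by apply: eq_bigr => i _; rewrite expr0 mulr1.
Qed.

End ZeroSet.

Definition zleading (F : polyan R) (n : nat) :=
  exists2 a : C, a != 0 & (msize (F - a *: X0 ^+ n) <= n)%N.

Definition top_pure_z (F : polyan R) :=
  forall m, m \in msupp F -> mdeg m = pdeg F -> m i1 = 0%N.

Lemma mcoeff_X0n n m : (X0 ^+ n)@_m = (m == zpow n)%:R.
Proof. by rewrite mpolyXn mcoeffX eq_sym. Qed.

Lemma pure_z_mnm (m : 'X_{1..2}) : m i1 = 0%N -> m = zpow (mdeg m).
Proof.
move=> m1; apply/mnmP => i; rewrite mulmnE mnm1E mdeg2 m1 addn0.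
by have [->|->] := ord2P i; rewrite /= ?mul1n ?mul0n.
Qed.

Lemma zleadingP F n : zleading F n <-> msize F = n.+1 /\ top_pure_z F.
Proof.
have mdeg_zpow : mdeg (zpow n) = n by rewrite mdegMn mdeg1 mul1n.
split=> [[a a0 hQ] | [sF pure]].
  have coefF m : mdeg m = n -> F@_m = a * (m == zpow n)%:R.
    move=> md; have /msize_mdeg_ge/memN_msupp_eq0 :
      (msize (F - a *: X0 ^+ n) <= mdeg m)%N by rewrite md.
    by rewrite mcoeffB mcoeffZ mcoeff_X0n => /eqP; rewrite subr_eq0 => /eqP.
  have sF : msize F = n.+1.
    apply/eqP; rewrite eqn_leq; apply/andP; split.
      rewrite -[F](subrK (a *: X0 ^+ n)); apply: leq_trans (msizeD_le _ _) _.
      by rewrite geq_max msize_ZXn andbT ltnW.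
    rewrite -{1}mdeg_zpow; apply: msize_mdeg_lt.
    by rewrite mcoeff_msupp coefF // eqxx mulr1.
  split=> // m; rewrite mcoeff_msupp /pdeg sF /= => Fm md; move: Fm.
  rewrite coefF //; case: (eqVneq m (zpow n)) => [-> _|_].
    by rewrite mulmnE mnm1E.
  by rewrite mulr0 eqxx.
have nzF : F != 0 by rewrite -msize_poly_eq0 sF.
have eq_zpow m : m \in msupp F -> mdeg m = n -> m = zpow n.
  by move=> mF md; rewrite -md {1}(pure_z_mnm (pure m mF _)) // /pdeg sF.
have ldeg : mdeg (mlead F) = n by apply: succn_inj; rewrite mlead_deg.
exists F@_(zpow n).
  by rewrite -(eq_zpow _ (mlead_supp nzF) ldeg) mleadc_eq0.
rewrite msizeE; apply/bigmax_leqP_seq => m.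
rewrite mcoeff_msupp mcoeffB mcoeffZ mcoeff_X0n => hm _.
move: hm; case: (eqVneq m (zpow n)) => [->|ne].
  by rewrite mulr1 subrr eqxx.
rewrite mulr0 subr0 -mcoeff_msupp => mF.
have := msize_mdeg_lt mF; rewrite sF ltnS leq_eqVlt => /orP[/eqP md|//].
by rewrite (eq_zpow m mF md) eqxx in ne.
Qed.

Lemma zleading_msize F n : zleading F n -> msize F = n.+1.
Proof. by case/zleadingP. Qed.

(* The swap [z <-> \bar z] turns the unique top-degree monomial [z^n] into
   [\bar z^n], the least monomial of degree [n], which [mlead] then detects. *)
Lemma top_pure_zP (G : polyan R) :
  G != 0 -> top_pure_z G <-> mlead (msym swap G) i0 = 0%N.
Proof.
move=> nzG; have nzG' : msym swap G != 0 by rewrite msym_eq0.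
have ldeg : mdeg (mlead (msym swap G)) = pdeg G.
  by rewrite /pdeg -(msize_msym swap) -mlead_deg.
split=> [pure | l0 m mG md].
  have := pure (mswap (mlead (msym swap G))).
  rewrite mcoeff_msupp -mcoeff_sym -mcoeff_msupp mlead_supp // mdeg_mperm ldeg.
  by rewrite mnmE tpermR => ->.
have mG' : mswap m \in msupp (msym swap G).
  rewrite mcoeff_msupp mcoeff_sym -mcoeff_msupp.
  by rewrite (_ : mswap (mswap m) = m) //; apply/mnmP => i; rewrite !mnmE tpermK.
have := mlead_top_unique l0 mG'; rewrite mdeg_mperm md ldeg => /(_ erefl) ml.
by move: l0; rewrite -ml mnmE tpermL.
Qed.

Lemma zleading_factor (P1 P2 : polyan R) n :
  zleading (P1 * P2) n -> zleading P1 (pdeg P1).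
Proof.
case/zleadingP => sP pure.
have nzP : P1 * P2 != 0 by rewrite -msize_poly_eq0 sP.
have nz1 : P1 != 0 by apply: contraNneq nzP => ->; rewrite mul0r.
have nz2 : P2 != 0 by apply: contraNneq nzP => ->; rewrite mulr0.
apply/zleadingP; split; first by rewrite prednK // lt0n msize_poly_eq0.
apply/top_pure_zP => //; move/(top_pure_zP nzP): pure.
rewrite msymM mleadM ?msym_eq0 // mnmDE => /eqP.
by rewrite addn_eq0 => /andP[/eqP].
Qed.

Lemma zleading_at_most_zeros F n : zleading F n -> at_most_zeros F (n ^ 2).
Proof.
case=> a a0 hQ s us zs; rewrite -mulnn.
by apply: (size_zero_seq_le a0 hQ us); rewrite addrC subrK.
Qed.

Lemma at_most_zerosM (P1 P2 : polyan R) k1 k2 :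
  at_most_zeros P1 k1 -> at_most_zeros P2 k2 -> at_most_zeros (P1 * P2) (k1 + k2).
Proof.
move=> h1 h2 s us zs; pose root1 z := peval P1 z == 0.
rewrite -(count_predC root1) -!size_filter; apply: leq_add.
  by apply: h1 => [|z]; [exact: filter_uniq | rewrite mem_filter => /andP[/eqP]].
apply: h2 => [|z]; first exact: filter_uniq.
rewrite mem_filter => /andP[/negPf nz1 /zs]; rewrite /pzero pevalM => /eqP.
by rewrite mulf_eq0 [_ == 0]nz1 => /eqP.
Qed.

Lemma exactly_zeros_le (F : polyan R) m k :
  exactly_zeros F m -> at_most_zeros F k -> (m <= k)%N.
Proof. by case=> s [us <- zs] /(_ s us (fun z => (zs z).1)). Qed.

Lemma zleading_irreducible F n :
  zleading F n -> exactly_zeros F (n ^ 2) -> pirreducible F.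
Proof.
move=> hF zs [P1 [P2 [d1 d2 eF]]]; move: hF zs; rewrite eF => hF zs.
have h1 := zleading_factor hF.
have h2 : zleading P2 (pdeg P2) by rewrite mulrC in hF; exact: zleading_factor hF.
have s1 := zleading_msize h1; have s2 := zleading_msize h2.
have nz1 : P1 != 0 by rewrite -msize_poly_eq0 s1.
have nz2 : P2 != 0 by rewrite -msize_poly_eq0 s2.
have n12 : n = (pdeg P1 + pdeg P2)%N.
  by apply: succn_inj; rewrite -(zleading_msize hF) msizeM // s1 s2 addSn addnS.
have := exactly_zeros_le zs
  (at_most_zerosM (zleading_at_most_zeros h1) (zleading_at_most_zeros h2)).
by rewrite n12; move: d1 d2; rewrite /pdeg; nia.
Qed.

Lemma zleading_an_conjan (p q : {poly C}) :
  (size q < size p)%N -> zleading (an_of p + conjan_of q) (size p).-1.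
Proof.
move=> qp; set n := (size p).-1.
have sp : size p = n.+1 by rewrite prednK // (leq_ltn_trans _ qp).
exists (lead_coef p); first by rewrite lead_coef_eq0 -size_poly_gt0 sp.
rewrite /an_of sp big_ord_recr /= lead_coefE sp addrAC addrK.
apply: leq_trans (msizeD_le _ _) _; rewrite geq_max.
apply/andP; split; apply: leq_trans (msize_sum _ _ _) _; apply/bigmax_leqP => j _.
  exact: leq_trans (msize_ZXn _ _ _) (ltn_ord j).
by apply: leq_trans (msize_ZXn _ _ _) _; have := ltn_ord j; lia.
Qed.

End Polyanalytic.

Theorem corollary2p14 (R : realType) :
  (* (i) *)
  (forall (n : nat) (a : R[i]) (P Pn1 : polyan R),
     a != 0 ->
     (msize Pn1 <= n)%N -> (* i.e. Pn1 = 0 or deg Pn1 <= n-1 *)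
     P = a *: 'X_(0 : 'I_2) ^+ n + Pn1 ->
     at_most_zeros P (n ^ 2) /\ (exactly_zeros P (n ^ 2) -> pirreducible P)) /\
  (* (ii) *)
  (forall (n : nat) (p q : {poly R[i]}) (P : polyan R),
     (size p).-1 = n ->
     (size q < size p)%N ->
     P = an_of p + conjan_of q ->
     at_most_zeros P (n ^ 2) /\ (exactly_zeros P (n ^ 2) -> pirreducible P)).
Proof.
have zeros n (F : polyan R) : zleading F n ->
    at_most_zeros F (n ^ 2) /\ (exactly_zeros F (n ^ 2) -> pirreducible F).
  by move=> hF; split; [exact: zleading_at_most_zeros | exact: zleading_irreducible].
split=> [n a P Q a0 hQ -> | n p q P <- qp ->]; apply: zeros.
  by exists a; rewrite // addrC addKr.
exact: zleading_an_conjan.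
Qed.
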